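(* Let $c\ge\lceil n/2\rceil$ and let $\mathbf{s}_n\in\mathcal{B}(n,c,d_1)$ with $d_1=n-c$ and $add(\mathbf{s}_n)=t_1$. Suppose that for some integer $0<b<n$ the shifted sequence $R^b(\mathbf{s}_n)$ belongs to $\mathcal{B}(n,c,d_2)$ and $add(R^b(\mathbf{s}_n))=t_2\ge t_1$. If $d_1+d_2\le c+t_2+t_1+1$, then $b=d_2$.
   Context: All sequences are binary (entries in $\mathbb{Z}_2$), $\overline{x}=x\oplus1$, $x\bmod d$ is the least nonnegative residue, and $\mathbf{a}^q$ is the concatenation of $q$ copies of $\mathbf a$. For $\mathbf{s}_n=(s_0,\dots,s_{n-1})$, $\mathbf{s}_j=(s_0,\dots,s_{j-1})$. A length-$m$ sequence is periodic if it is the concatenation of $m/e$ copies of a length-$e$ sequence for a proper divisor $e$ of $m$, aperiodic otherwise. Right circular shift: $R^k(\mathbf{s}_n)=(s_{n-k},\dots,s_{n-1},s_0,\dots,s_{n-k-1})$. For $c\ge\lfloor n/2\rfloor$ and $1\le d\le\min\{n-c,\lfloor n/2\rfloor\}$, $\mathcal{B}(n,c,d)$ is the set of aperiodic length-$n$ sequences $\mathbf{s}_n$ with $\mathbf{s}_d$ aperiodic and $\mathbf{s}_{c+d}=(s_0,\dots,s_{d-1})^q(s_0,\dots,s_{r-1},\overline{s_r})$, where $q=\lfloor(c+d-1)/d\rfloor$, $r=c+d-1-qd$, and $s_{c+d},\dots,s_{n-1}$ are arbitrary. For $\mathbf{s}_n\in\mathcal{B}(n,c,d)$, $add(\mathbf{s}_n)$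 is the integer $t\ge0$ such that $s_{n-1-i}=s_{(d-1-i)\bmod d}$ for $0\le i<t$ and $s_{n-1-t}\neq s_{(d-1-t)\bmod d}$. *)

From mathcomp Require Import all_boot.
Set Implicit Arguments. Unset Strict Implicit. Unset Printing Implicit Defensive.

Definition periodic (s : seq bool) : Prop :=
  exists e : nat, [/\ 0 < e, e < size s, e %| size s &
    s = flatten (nseq (size s %/ e) (take e s))].

Definition aperiodic (s : seq bool) : Prop := ~ periodic s.

(* Right circular shift R^k: (s_{n-k},...,s_{n-1},s_0,...,s_{n-k-1}) *)
Definition Rshift (k : nat) (s : seq bool) : seq bool := rotr k s.

Definition inB (n c d : nat) (s : seq bool) : Prop :=
  let q := (c + d - 1) %/ d in
  let r := c + d - 1 - q * d in
  [/\ size s = n, n./2 <= c, 1 <= d & d <= minn (n - c) n./2] /\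
  [/\ aperiodic s, aperiodic (take d s) &
      take (c + d) s =
        flatten (nseq q (take d s)) ++ rcons (take r s) (~~ nth false s r)].

(* add(s) = t for s in B(n,c,d):  s_{n-1-i} = s_{(d-1-i) mod d} for i < t,
   and s_{n-1-t} <> s_{(d-1-t) mod d}.  Note ((d-1-i) mod d) = d-1-(i %% d)
   for d >= 1 (least nonnegative residue). *)
Definition is_add (n d : nat) (s : seq bool) (t : nat) : Prop :=
  [/\ t < n,
      (forall i, i < t -> nth false s (n - 1 - i) = nth false s (d - 1 - i %% d)) &
      nth false s (n - 1 - t) != nth false s (d - 1 - t %% d)].

(* Read s cyclically, as a function f : int -> bool of period n.  Membership
   of s in B(n,c,d1) with add(s) = t1 gives f j = f (j + d1) on the window
   -t1 <= j <= c-2 and f (c-1) <> f (c-1+d1); likewise R^b(s) gives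
   f j = f (j + d2) on -b-t2 <= j <= c-2-b and a failure at j = c-1-b.  Along
   a closed walk of such steps the failures come in even number, so no closed
   walk uses exactly one failing step.  In each of the cases b < d2,
   d2 < b < c+d2 and c+d2 < b, such a walk (the rotation by p on Z/(p+q) for
   suitable p, q) exists as soon as t1 or t2 is too long; the resulting bounds
   contradict d1 + d2 <= c + t1 + t2 + 1.  When b = c+d2 the same walks show
   that s_{d1} is invariant under rotation by d2 < d1, hence periodic. *)

From mathcomp Require Import all_boot ssralg ssrnum ssrint intdiv zify.
Set Implicit Arguments. Unset Strict Implicit. Unset Printing Implicit Defensive.
Import GRing.Theory.

(* The steps k -> k+p (k < q) and k+q -> k (k < p) are the rotation by p of
   Z/(p+q): every vertex starts one step and ends one, so the xor of g over the
   endpoints of all steps vanishes. *)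
Lemma rot_cycle_parity (g : nat -> bool) (p q k0 : nat) : k0 < q ->
  (forall k, k < q -> k != k0 -> g k = g (k + p)) ->
  (forall k, k < p -> g (k + q) = g k) ->
  g k0 = g (k0 + p).
Proof.
move=> k0_lt_q eq_p eq_q.
have sum_split m1 m2 :
    \big[addb/false]_(i < m1) g i (+) \big[addb/false]_(i < m2) g (i + m1)
    = \big[addb/false]_(i < m1 + m2) g i.
  by rewrite big_split_ord /=; congr addb; apply: eq_bigr => i _; rewrite addnC.
have edges_xor : \big[addb/false]_(k < q) (g k (+) g (k + p))
    (+) \big[addb/false]_(k < p) (g (k + q) (+) g k) = false.
  rewrite !big_split /= addbACA sum_split [X in _ (+) X]addbC sum_split.
  by rewrite addnC addbb.
have p_edges : \big[addb/false]_(k < q) (g k (+) g (k + p)) = g k0 (+) g (k0 + p).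
  rewrite (bigD1 (Ordinal k0_lt_q)) //= big1 ?addbF // => k k_neq.
  by rewrite eq_p ?addbb //; rewrite -val_eqE in k_neq.
have q_edges : \big[addb/false]_(k < p) (g (k + q) (+) g k) = false.
  by rewrite big1 // => k _; rewrite eq_q ?addbb.
by move: edges_xor; rewrite p_edges q_edges addbF; case: (g k0); case: (g (k0 + p)).
Qed.

Section Period.
Variables (T : Type) (u : nat -> T).

Lemma periodM p : (forall i, u (i + p) = u i) -> forall k i, u (i + k * p) = u i.
Proof.
move=> u_p; elim=> [|k IHk] i; first by rewrite addn0.
by rewrite mulSn addnCA addnC u_p IHk.
Qed.

Lemma period_mod p : (forall i, u (i + p) = u i) -> forall i, u i = u (i %% p).
Proof. by move=> u_p i; rewrite {1}(divn_eq i p) addnC periodM. Qed.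

Lemma period_gcdn p q : 0 < q ->
  (forall i, u (i + p) = u i) -> (forall i, u (i + q) = u i) ->
  forall i, u (i + gcdn p q) = u i.
Proof.
move=> q_gt0 u_p u_q i; have [a _ /dvdnP [k Bezout]] := Bezoutl p q_gt0.
by rewrite -(periodM u_p a) -addnA gcdnC Bezout periodM.
Qed.

End Period.

Lemma size_flatten_nseq (T : Type) (w : seq T) q : size (flatten (nseq q w)) = q * size w.
Proof. by rewrite size_flatten /shape map_nseq sumn_nseq mulnC. Qed.

Lemma nth_flatten_nseq (T : Type) (x0 : T) (w : seq T) q i : i < q * size w ->
  nth x0 (flatten (nseq q w)) i = nth x0 w (i %% size w).
Proof.
elim: q i => [|q IHq] i //=; rewrite mulSn nth_cat => i_lt.
case: ltnP => [i_lt_w | w_le_i]; first by rewrite modn_small.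
by rewrite IHq ?ltn_subLR // -modnDr subnK.
Qed.

Lemma nth_rot (T : Type) (x0 : T) (s : seq T) k i : k <= size s -> i < size s ->
  nth x0 (rot k s) i = nth x0 s ((i + k) %% size s).
Proof.
move=> k_le i_lt; rewrite /rot nth_cat size_drop.
case: ltnP => [i_lt_sk | sk_le_i]; first by rewrite nth_drop addnC modn_small //; lia.
rewrite nth_take; last lia.
have -> : i + k = i - (size s - k) + size s by lia.
by rewrite modnDr modn_small //; lia.
Qed.

Lemma periodic_of_rot_invariant (w : seq bool) d : 0 < d < size w ->
  (forall i, i < size w -> nth false w ((i + d) %% size w) = nth false w i) ->
  periodic w.
Proof.
move=> /andP [d_gt0 d_lt_w] rot_w; set m := size w in d_lt_w rot_w *.
pose u i := nth false w (i %% m).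
have m_gt0 : 0 < m := ltn_trans d_gt0 d_lt_w.
have u_m i : u (i + m) = u i by rewrite /u modnDr.
have u_d i : u (i + d) = u i by rewrite /u -modnDml rot_w // ltn_mod.
have u_g := period_gcdn m_gt0 u_d u_m; set g := gcdn d m in u_g.
have g_gt0 : 0 < g by rewrite gcdn_gt0 d_gt0.
have g_lt_m : g < m := leq_ltn_trans (dvdn_leq d_gt0 (dvdn_gcdl d m)) d_lt_w.
have g_dvd_m : g %| m := dvdn_gcdr d m.
have size_take_g : size (take g w) = g by rewrite size_takel // ltnW.
exists g; split => //; apply: (@eq_from_nth _ false) => [|i i_lt_m].
  by rewrite size_flatten_nseq size_take_g divnK.
have ig_lt_m : i %% g < m := ltn_trans (ltn_pmod i g_gt0) g_lt_m.
rewrite nth_flatten_nseq size_take_g ?divnK // nth_take ?ltn_pmod //.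
by have := period_mod u_g i; rewrite /u !(modn_small i_lt_m, modn_small ig_lt_m).
Qed.

Lemma inB_dims n c d s : inB n c d s -> [/\ size s = n, 0 < d, d <= c & c + d <= n].
Proof.
case=> [[size_s half_le_c d_gt0]]; rewrite leq_min => /andP [d_le d_le_half] _.
by split => //; lia.
Qed.

Lemma inB_prefix n c d s : inB n c d s ->
  (forall i, i < c + d - 1 -> nth false s i = nth false s (i %% d)) /\
  nth false s (c + d - 1) != nth false s ((c + d - 1) %% d).
Proof.
move=> hB; have [size_s d_gt0 _ cd_le_n] := inB_dims hB.
case: hB => _ [_ _].
rewrite [X in X - _ * _](divn_eq (c + d - 1) d) addKn.
have r_lt_d : (c + d - 1) %% d < d by rewrite ltn_mod.
have qr := divn_eq (c + d - 1) d.
set q := (c + d - 1) %/ d in qr *; set r := (c + d - 1) %% d in r_lt_d qr *.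
move=> prefix_eq.
have nth_prefix i : i < c + d -> nth false s i =
    nth false (flatten (nseq q (take d s)) ++ rcons (take r s) (~~ nth false s r)) i.
  by move=> i_lt; rewrite -prefix_eq nth_take.
have size_w : size (take d s) = d by rewrite size_takel // size_s; lia.
have size_r : size (take r s) = r by rewrite size_takel // size_s; lia.
split=> [i i_lt|].
- rewrite nth_prefix; last lia.
  rewrite nth_cat size_flatten_nseq size_w.
  case: ltnP => [i_lt_qd | qd_le_i].
    by rewrite nth_flatten_nseq size_w // nth_take // ltn_mod.
  have i_mod : i %% d = i - q * d.
    by rewrite -{1}(subnKC qd_le_i) modnMDl modn_small; lia.
  by rewrite nth_rcons size_r ifT ?nth_take ?i_mod //; lia.
- rewrite nth_prefix; last lia.
  rewrite nth_cat size_flatten_nseq size_w.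
  rewrite ifF; last lia.
  rewrite nth_rcons size_r.
  have -> : c + d - 1 - q * d = r by lia.
  by rewrite ltnn eqxx; case: (nth false s r).
Qed.

Local Open Scope ring_scope.

Lemma cycle_parity (f : int -> bool) (a x0 : int) (p q : nat) :
  a <= x0 < a + q%:Z ->
  (forall x, a <= x < a + q%:Z -> x != x0 -> f x = f (x + p%:Z)) ->
  (forall x, a <= x < a + p%:Z -> f (x + q%:Z) = f x) ->
  f x0 = f (x0 + p%:Z).
Proof.
move=> x0_in eq_p eq_q.
have -> : x0 = a + `|x0 - a|%N by lia.
rewrite -addrA -PoszD.
apply: (rot_cycle_parity (g := fun k : nat => f (a + k%:Z)) (q := q)); first lia.
- move=> k k_lt k_neq; rewrite PoszD addrA eq_p //; first lia.
  by apply: contra_neq k_neq; lia.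
- by move=> k k_lt; rewrite PoszD addrA eq_q //; lia.
Qed.

Definition periodic_ext (m : nat) (s : seq bool) (j : int) : bool :=
  nth false s `|(j %% m)%Z|.

Lemma periodic_extD m s j : periodic_ext m s (j + m%:Z) = periodic_ext m s j.
Proof. by rewrite /periodic_ext modzDr. Qed.

Lemma periodic_ext_nat m s (i : nat) : (i < m)%N -> periodic_ext m s i = nth false s i.
Proof. by move=> i_lt; rewrite /periodic_ext modz_nat modn_small. Qed.

Lemma periodic_ext_Negz m s (i : nat) : (0 < m)%N ->
  periodic_ext m s (Negz i) = nth false s (m - 1 - i %% m).
Proof.
move=> m_gt0; rewrite /periodic_ext modNz_nat //.
by move: (i %% m)%N (ltn_pmod i m_gt0) => r r_lt; congr nth; lia.
Qed.

Lemma periodic_ext_rotr n s b j : size s = n -> (b < n)%N ->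
  periodic_ext n (rotr b s) j = periodic_ext n s (j - b%:Z).
Proof.
move=> size_s b_lt_n.
have n_neq0 : n%:Z != 0 by lia.
have k_ge0 : 0 <= (j %% n)%Z := modz_ge0 j n_neq0.
have k_lt : (`|(j %% n)%Z| < n)%N by rewrite -ltz_nat gez0_abs // ltz_pmod //; lia.
rewrite /periodic_ext /rotr nth_rot ?size_s ?leq_subr //; congr nth.
apply/eqP; rewrite -eqz_nat gez0_abs ?modz_ge0 //.
rewrite -modz_nat PoszD gez0_abs // modzDml -(modzDr (j - b%:Z)).
by apply/eqP; congr (_ %% _)%Z; lia.
Qed.

Lemma inB_periodic_ext n c d t s : inB n c d s -> is_add n d s t ->
  (forall j, - t%:Z <= j <= c%:Z + d%:Z - 2 -> periodic_ext n s j = periodic_ext d s j) /\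
  periodic_ext n s (c%:Z + d%:Z - 1) != periodic_ext d s (c%:Z + d%:Z - 1).
Proof.
move=> hB [t_lt_n add_run _]; have [size_s d_gt0 _ cd_le_n] := inB_dims hB.
have [prefix prefix_defect] := inB_prefix hB.
have ext_d (i : nat) : periodic_ext d s i = nth false s (i %% d).
  by rewrite /periodic_ext modz_nat.
split=> [[i | i] /andP [j_ge j_le] | ].
- rewrite periodic_ext_nat; last lia.
  by rewrite ext_d prefix //; lia.
- rewrite !periodic_ext_Negz //; last lia.
  by rewrite (modn_small (_ : i < n)%N) ?add_run //; lia.
- have -> : c%:Z + d%:Z - 1 = (c + d - 1)%N by lia.
  by rewrite periodic_ext_nat ?ext_d //; lia.
Qed.

Lemma inB_window n c d t s : inB n c d s -> is_add n d s t ->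
  (forall j, - t%:Z <= j <= c%:Z - 2 -> periodic_ext n s j = periodic_ext n s (j + d%:Z)) /\
  periodic_ext n s (c%:Z - 1) != periodic_ext n s (c%:Z - 1 + d%:Z).
Proof.
move=> hB hadd; have [ext_eq ext_defect] := inB_periodic_ext hB hadd.
have [_ d_gt0 d_le_c _] := inB_dims hB.
split=> [j j_in | ].
  by rewrite !ext_eq ?periodic_extD //; lia.
rewrite ext_eq; last lia.
rewrite -periodic_extD (_ : c%:Z - 1 + d%:Z = c%:Z + d%:Z - 1); last lia.
by rewrite eq_sym.
Qed.

Lemma inB_window_rotr n c d t b s : size s = n -> (b < n)%N ->
  inB n c d (rotr b s) -> is_add n d (rotr b s) t ->
  (forall j, - (b + t)%:Z <= j <= c%:Z - 2 - b%:Z ->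
     periodic_ext n s j = periodic_ext n s (j + d%:Z)) /\
  periodic_ext n s (c%:Z - 1 - b%:Z) != periodic_ext n s (c%:Z - 1 - b%:Z + d%:Z).
Proof.
move=> size_s b_lt_n hB hadd; have [window defect] := inB_window hB hadd.
split=> [j j_in | ].
  have := window (j + b%:Z); rewrite !periodic_ext_rotr // addrK (addrAC j) addrK.
  by apply; lia.
by move: defect; rewrite !periodic_ext_rotr // (addrAC _ d%:Z).
Qed.

Section ShiftedWindows.
Variables (f : int -> bool) (n c d1 d2 b t1 t2 : nat).
Hypotheses (f_per : forall j, f (j + n%:Z) = f j) (n_eq : n = (c + d1)%N).
Hypotheses (d1_le_c : (d1 <= c)%N) (d2_gt0 : (0 < d2)%N) (d2_le_d1 : (d2 <= d1)%N).
Hypotheses (b_gt0 : (0 < b)%N) (b_lt_n : (b < n)%N).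
Hypothesis U : forall j, - t1%:Z <= j <= c%:Z - 2 -> f j = f (j + d1%:Z).
Hypothesis U_defect : f (c%:Z - 1) != f (c%:Z - 1 + d1%:Z).
Hypothesis V : forall j, - (b + t2)%:Z <= j <= c%:Z - 2 - b%:Z -> f j = f (j + d2%:Z).
Hypothesis V_defect : f (c%:Z - 1 - b%:Z) != f (c%:Z - 1 - b%:Z + d2%:Z).

Lemma f_perE x y : y = x + n%:Z -> f y = f x.
Proof. by move->; exact: f_per. Qed.

Lemma f_eqD x p : f (x + n%:Z) = f (x + n%:Z + p) -> f x = f (x + p).
Proof. by rewrite f_per (addrAC x) f_per. Qed.

Lemma f_eqB x p : f (x - n%:Z) = f (x - n%:Z + p) -> f x = f (x + p).
Proof. by rewrite -(f_per (x - n%:Z)) subrK (addrAC x) -(f_per (x + p - n%:Z)) subrK. Qed.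

Lemma U_defect_wrapped : f (- d1%:Z - 1) != f (-1).
Proof.
have := U_defect; rewrite (f_perE (x := - d1%:Z - 1) (y := c%:Z - 1)); last lia.
by rewrite (f_perE (x := -1) (y := c%:Z - 1 + d1%:Z)) //; lia.
Qed.

Lemma V_cycle_not_closed (q : nat) : (0 < q)%N -> (q <= c + t2)%N ->
  ~ (forall x, c%:Z - b%:Z - q%:Z <= x < c%:Z - b%:Z - q%:Z + d2%:Z -> f (x + q%:Z) = f x).
Proof.
move=> q_gt0 q_le eq_q; apply/negP: V_defect; apply/negPn/eqP.
apply: (cycle_parity (a := c%:Z - b%:Z - q%:Z) (q := q)) => //; first lia.
by move=> x x_in x_neq; apply: V; lia.
Qed.

Lemma small_shift_t1 : (b < d2)%N -> (c + t1 < b + d1)%N.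
Proof.
rewrite ltnNge => b_lt_d2; apply/negP => le_b_d1.
apply: (V_cycle_not_closed (q := d1)); [lia | lia | move=> x x_in].
by apply/esym/U; lia.
Qed.

Lemma small_shift_t2 : (b < d2)%N -> (b + t2 < d2)%N.
Proof.
rewrite ltnNge => b_lt_d2; apply/negP => d2_le.
apply/negP: U_defect_wrapped; apply/negPn/eqP.
rewrite -(f_perE (x := - d1%:Z - 1) (y := -1 + c%:Z)); last lia.
apply/esym/(cycle_parity (a := - d2%:Z) (q := d2)); first lia.
- move=> x x_in x_neq; rewrite [RHS]U; last lia.
  by apply/esym/f_perE; lia.
- by move=> x x_in; apply/esym/V; lia.
Qed.

Lemma medium_shift_t1 : (d2 < b)%N -> (b < c + d2)%N -> (c + t1 < b)%N.
Proof.
move=> d2_lt_b b_lt; rewrite ltnNge; apply/negP => b_le.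
apply: (V_cycle_not_closed (q := c)); [lia | lia | move=> x x_in].
by rewrite U; [apply: f_perE | ]; lia.
Qed.

Lemma medium_shift_t2 : (d2 < b)%N -> (b < c + d2)%N -> (b + t2 < d1 + d2)%N.
Proof.
move=> d2_lt_b b_lt; rewrite ltnNge; apply/negP => le_b.
apply/negP: U_defect_wrapped; apply/negPn/eqP.
rewrite [in RHS](_ : -1 = - d1%:Z - 1 + d1%:Z); last lia.
apply: (cycle_parity (a := - d1%:Z - d2%:Z) (q := d2)); first lia.
- by move=> x x_in x_neq; apply/f_eqD/U; lia.
- by move=> x x_in; apply/esym/V; lia.
Qed.

Lemma large_shift_impossible : ~ (c + d2 < b)%N.
Proof.
move=> lt_b; apply: (V_cycle_not_closed (q := d1)); [lia | lia | move=> x x_in].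
by apply/esym/f_eqD/U; lia.
Qed.

Lemma shift_cases : (d1 + d2 <= c + t2 + t1 + 1)%N -> b = d2 \/ b = (c + d2)%N.
Proof.
move=> budget; case: (ltngtP b d2) => [b_lt_d2 | d2_lt_b | ->]; last by left.
  by have := small_shift_t1 b_lt_d2; have := small_shift_t2 b_lt_d2; lia.
case: (ltngtP b (c + d2)) => [b_lt | b_gt | ->]; last by right.
  by have := medium_shift_t1 d2_lt_b b_lt; have := medium_shift_t2 d2_lt_b b_lt; lia.
by have := large_shift_impossible.
Qed.

Lemma prefix_rot_invariant : b = (c + d2)%N ->
  forall k, (k < d1)%N -> f ((k + d2) %% d1)%N = f k.
Proof.
move=> b_eq; have d2_lt_d1 : (d2 < d1)%N by lia.
have U0 x : 0 <= x <= c%:Z - 2 -> f x = f (x + d1%:Z) by move=> x_in; apply: U; lia.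
have fam_p x : 0 <= x < (d1 - d2)%N%:Z -> x != (d1 - d2)%N%:Z - 1 -> f x = f (x + d2%:Z).
  move=> x_in x_neq; rewrite (U0 x) ?(U0 (x + d2%:Z)); [ | lia | lia].
  by rewrite (addrAC x); apply/f_eqB/V; lia.
have fam_q x : 0 <= x < d2%:Z -> f (x + (d1 - d2)%N%:Z) = f x.
  move=> x_in; rewrite (U0 x); last lia.
  rewrite [in RHS](_ : x + d1%:Z = x + (d1 - d2)%N%:Z + d2%:Z); last lia.
  by apply/f_eqB/V; lia.
have at_defect := cycle_parity (x0 := (d1 - d2)%N%:Z - 1) _ fam_p fam_q.
move=> k k_lt; case: (ltnP (k + d2) d1) => [lt | ge].
  rewrite modn_small // PoszD; symmetry.
  have [->|k_neq] := eqVneq k%:Z ((d1 - d2)%N%:Z - 1); first by apply: at_defect; lia.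
  by apply: fam_p; lia.
rewrite (_ : (k + d2 = k + d2 - d1 + d1)%N); last lia.
rewrite modnDr modn_small; last lia.
by rewrite -fam_q; [congr f | ]; lia.
Qed.

End ShiftedWindows.

Local Close Scope ring_scope.

Theorem lemma7 (n c d2 b t1 t2 : nat) (s : seq bool) :
  n <= c.*2 ->                          (* c >= ceil(n/2) *)
  inB n c (n - c) s ->
  is_add n (n - c) s t1 ->
  0 < b -> b < n ->
  inB n c d2 (Rshift b s) ->
  is_add n d2 (Rshift b s) t2 ->
  t1 <= t2 ->
  (n - c) + d2 <= c + t2 + t1 + 1 ->
  b = d2.
Proof.
(* Neither [n <= c.*2] (it follows from [inB]) nor [t1 <= t2] is needed. *)
move=> _ hS addS b_gt0 b_lt_n hW addW _ budget.
have [size_s d1_gt0 d1_le_c _] := inB_dims hS.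
have [_ d2_gt0 _ cd2_le_n] := inB_dims hW.
have n_eq : n = c + (n - c) by lia.
have d2_le_d1 : d2 <= n - c by lia.
have [U U_defect] := inB_window hS addS.
have [V V_defect] := inB_window_rotr size_s b_lt_n hW addW.
have f_per := periodic_extD n s.
have [//|b_eq] := shift_cases f_per n_eq d1_le_c d2_gt0 d2_le_d1 b_gt0 b_lt_n
  U U_defect V V_defect budget.
case: hS => _ [_ aperiodic_prefix _]; case: aperiodic_prefix.
have size_prefix : size (take (n - c) s) = n - c by rewrite size_takel // size_s leq_subr.
apply: (periodic_of_rot_invariant (d := d2)); rewrite size_prefix; first lia.
move=> i i_lt; have mod_lt := ltn_pmod (i + d2) d1_gt0.
rewrite !nth_take // -!(@periodic_ext_nat n s); [ | lia | lia].
exact: (prefix_rot_invariant f_per n_eq d1_le_c d2_gt0 d2_le_d1 b_gt0 b_lt_n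
  U U_defect V V_defect b_eq).
Qed.
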